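(* An $L$-topological space $X$ is a strictly injective $T_0$ $L$-topological space if and only if $X$ is $L$-sober.
   Context: $L$ is a frame. An $L$-topology on $X$ is $\mathcal O(X)\subseteq L^X$ closed under finite meets and arbitrary joins containing all constant maps $a_X$; $f$ continuous if $f^\leftarrow(B)=B\circ f$ is open for all open $B$. $T_0$: $A(x)=A(y)$ for all open $A$ implies $x=y$. A map $f:Y\to Z$ is a quasihomeomorphism if $f^\leftarrow:\mathcal O(Z)\to\mathcal O(Y)$ is a bijection; a subspace embedding if it is injective and $\mathcal O(Y)=\{B\circ f:B\in\mathcal O(Z)\}$; a strict embedding if it is both. A $T_0$ space $X$ is strictly injective if for every strict embedding $j:Y\to Z$ between $T_0$ $L$-topological spaces and every continuous $f:Y\to X$ there is a continuous $g:Z\to X$ with $g\circ j=f$. A point of $\mathcal O(X)$ is $p:\mathcal O(X)\to L$ preserving binary meets and arbitrary joins with $p(\lambda_X)=\lambda$; $[x](A)=A(x)$; $X$ is $L$-sober if $x\mapsto[x]$ is a bijection from $X$ onto the set of points of $\mathcal O(X)$. *)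

Record frame := Frame {
  fcar :> Type;
  fle : fcar -> fcar -> Prop;
  fle_refl : forall a, fle a a;
  fle_trans : forall a b c, fle a b -> fle b c -> fle a c;
  fle_antisym : forall a b, fle a b -> fle b a -> a = b;
  fsup : (fcar -> Prop) -> fcar;
  fsup_ub : forall (S : fcar -> Prop) a, S a -> fle a (fsup S);
  fsup_least : forall (S : fcar -> Prop) b,
      (forall a, S a -> fle a b) -> fle (fsup S) b;
  fmeet : fcar -> fcar -> fcar;
  fmeet_lb_l : forall a b, fle (fmeet a b) a;
  fmeet_lb_r : forall a b, fle (fmeet a b) b;
  fmeet_glb : forall a b c, fle c a -> fle c b -> fle c (fmeet a b);
  fmeet_distr : forall a (S : fcar -> Prop),
      fmeet a (fsup S) = fsup (fun b => exists s, S s /\ b = fmeet a s)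
}.

Arguments fle {L} : rename.
Arguments fsup {L} : rename.
Arguments fmeet {L} : rename.

Section LTop.
Variable L : frame.

Definition pmeet {X : Type} (A B : X -> L) : X -> L := fun x => fmeet (A x) (B x).

Definition pjoin {X : Type} (S : (X -> L) -> Prop) : X -> L :=
  fun x => fsup (fun a => exists A, S A /\ a = A x).

(* An L-topological space: a set X with O(X) ⊆ L^X closed under finite meets
   (binary meets; the empty meet is the constant top, a constant map) and
   arbitrary joins, and containing all constant maps. *)
Record ltop := LTopSpace {
  lpt :> Type;
  lopen : (lpt -> L) -> Prop;
  lopen_meet : forall A B, lopen A -> lopen B -> lopen (pmeet A B);
  lopen_join : forall S : (lpt -> L) -> Prop,
      (forall A, S A -> lopen A) -> lopen (pjoin S);
  lopen_const : forall a : L, lopen (fun _ => a)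
}.

Definition lcontinuous (X Y : ltop) (f : X -> Y) : Prop :=
  forall B : Y -> L, lopen Y B -> lopen X (fun x => B (f x)).

Definition T0 (X : ltop) : Prop :=
  forall x y : X, (forall A, lopen X A -> A x = A y) -> x = y.

(* quasihomeomorphism: f^<- : O(Z) -> O(Y) is (well defined, i.e. f continuous)
   a bijection *)
Definition quasihomeomorphism (Y Z : ltop) (f : Y -> Z) : Prop :=
  lcontinuous Y Z f /\
  (forall B1 B2 : Z -> L, lopen Z B1 -> lopen Z B2 ->
      (fun y => B1 (f y)) = (fun y => B2 (f y)) -> B1 = B2) /\
  (forall A : Y -> L, lopen Y A -> exists B, lopen Z B /\ A = (fun y => B (f y))).

Definition subspace_embedding (Y Z : ltop) (f : Y -> Z) : Prop :=
  (forall y1 y2, f y1 = f y2 -> y1 = y2) /\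
  (forall A : Y -> L, lopen Y A <-> exists B, lopen Z B /\ A = (fun y => B (f y))).

Definition strict_embedding (Y Z : ltop) (f : Y -> Z) : Prop :=
  quasihomeomorphism Y Z f /\ subspace_embedding Y Z f.

Definition strictly_injective (X : ltop) : Prop :=
  T0 X /\
  forall (Y Z : ltop) (j : Y -> Z) (f : Y -> X),
    T0 Y -> T0 Z -> strict_embedding Y Z j -> lcontinuous Y X f ->
    exists g : Z -> X, lcontinuous Z X g /\ forall y, g (j y) = f y.

Definition Opens (X : ltop) : Type := { A : X -> L | lopen X A }.

Definition is_point (X : ltop) (p : Opens X -> L) : Prop :=
  (forall A B C : Opens X,
      proj1_sig C = pmeet (proj1_sig A) (proj1_sig B) ->
      p C = fmeet (p A) (p B)) /\
  (forall (S : Opens X -> Prop) (C : Opens X),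
      proj1_sig C = pjoin (fun A => exists U, S U /\ A = proj1_sig U) ->
      p C = fsup (fun a => exists U, S U /\ a = p U)) /\
  (forall (lam : L) (C : Opens X), proj1_sig C = (fun _ => lam) -> p C = lam).

Definition eval_point (X : ltop) (x : X) : Opens X -> L :=
  fun A => proj1_sig A x.

Definition lsober (X : ltop) : Prop :=
  (forall x : X, is_point X (eval_point X x)) /\
  (forall x y : X, eval_point X x = eval_point X y -> x = y) /\
  (forall p, is_point X p -> exists x : X, eval_point X x = p).

End LTop.

From Stdlib Require Import FunctionalExtensionality ProofIrrelevance ClassicalEpsilon.

(* A quasihomeomorphism j : Y -> Z identifies O(Z) with O(Y), so each z in Z
   yields a point A |-> (j^<-)^-1(A)(z) of O(Y); pushed forward along a
   continuous f : Y -> X it becomes a point of O(X), and sobriety of X turns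
   it into g(z).  Conversely, x |-> [x] is a strict embedding of a T0 space X
   into the T0 space of points of O(X), and a continuous retraction g of it
   satisfies [g p] = p, because every open of X pulled back along g is the
   restriction of an open of the space of points. *)

Section LSobriety.
Variable L : frame.

Lemma fsup_ext (P Q : L -> Prop) : (forall a, P a <-> Q a) -> fsup P = fsup Q.
Proof.
  intro H. apply fle_antisym; apply fsup_least; intros a Ha; apply fsup_ub, H, Ha.
Qed.

Lemma pjoin_image {X I : Type} (P : I -> Prop) (F : I -> X -> L) (x : X) :
  pjoin L (fun B => exists i, P i /\ B = F i) x = fsup (fun a => exists i, P i /\ a = F i x).
Proof.
  apply fsup_ext. intro a; split.
  - intros [B [[i [Hi ->]] ->]]. eauto.
  - intros [i [Hi ->]]. eauto.
Qed.

Lemma is_point_join_image (X : ltop L) (p : Opens L X -> L) (I : Type)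
    (P : I -> Prop) (F : I -> Opens L X) (C : Opens L X) :
  is_point L X p ->
  proj1_sig C = pjoin L (fun A => exists i, P i /\ A = proj1_sig (F i)) ->
  p C = fsup (fun a => exists i, P i /\ a = p (F i)).
Proof.
  intros [_ [Hjoin _]] E.
  rewrite (Hjoin (fun U => exists i, P i /\ U = F i)).
  - apply fsup_ext. intro a; split.
    + intros [U [[i [Hi ->]] ->]]. eauto.
    + intros [i [Hi ->]]. eauto.
  - rewrite E. extensionality x. rewrite !pjoin_image.
    apply fsup_ext. intro a; split.
    + intros [i [Hi ->]]. exists (F i). eauto.
    + intros [U [[i [Hi ->]] ->]]. eauto.
Qed.

Lemma eval_point_is_point (X : ltop L) (x : X) : is_point L X (eval_point L X x).
Proof.
  split; [|split].
  - intros A B C E. unfold eval_point. rewrite E. reflexivity.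
  - intros S C E. unfold eval_point. rewrite E, pjoin_image. reflexivity.
  - intros lam C E. unfold eval_point. rewrite E. reflexivity.
Qed.

Lemma eval_point_eq (X : ltop L) (x y : X) :
  eval_point L X x = eval_point L X y <-> forall A, lopen L X A -> A x = A y.
Proof.
  split.
  - intros E A HA. exact (f_equal (fun p => p (exist _ A HA)) E).
  - intro H. extensionality U. apply H, proj2_sig.
Qed.

Lemma T0_eval_point_inj (X : ltop L) :
  T0 L X <-> forall x y : X, eval_point L X x = eval_point L X y -> x = y.
Proof.
  split; intros H x y E; apply H, eval_point_eq, E.
Qed.

Lemma lsober_T0 (X : ltop L) : lsober L X -> T0 L X.
Proof. intros [_ [Hinj _]]. apply T0_eval_point_inj, Hinj. Qed.

Definition lpreimage {X Y : ltop L} {f : X -> Y} (Hf : lcontinuous L X Y f)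
    (U : Opens L Y) : Opens L X :=
  exist _ (fun x => proj1_sig U (f x)) (Hf _ (proj2_sig U)).

Lemma is_point_lpreimage (X Y : ltop L) (f : X -> Y) (Hf : lcontinuous L X Y f)
    (p : Opens L X -> L) :
  is_point L X p -> is_point L Y (fun U => p (lpreimage Hf U)).
Proof.
  intro Hp. split; [|split].
  - intros A B C E. apply (proj1 Hp). simpl. rewrite E. reflexivity.
  - intros S C E. apply (is_point_join_image X p _ S (lpreimage Hf)); [exact Hp|].
    simpl. rewrite E. extensionality x. rewrite !pjoin_image. reflexivity.
  - intros lam C E. apply (proj2 (proj2 Hp)). simpl. rewrite E. reflexivity.
Qed.

Section Quasihomeomorphism.
Variables (Y Z : ltop L) (j : Y -> Z).
Hypothesis Hj : quasihomeomorphism L Y Z j.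

(* The inverse of the bijection j^<- : O(Z) -> O(Y). *)
Definition qh_extend (A : Opens L Y) : Z -> L :=
  proj1_sig (constructive_indefinite_description _ (proj2 (proj2 Hj) _ (proj2_sig A))).

Lemma qh_extend_spec (A : Opens L Y) :
  lopen L Z (qh_extend A) /\ proj1_sig A = (fun y => qh_extend A (j y)).
Proof. unfold qh_extend. destruct constructive_indefinite_description as [B HB]. exact HB. Qed.

Lemma lopen_qh_extend (A : Opens L Y) : lopen L Z (qh_extend A).
Proof. apply qh_extend_spec. Qed.

Lemma qh_extend_comp (A : Opens L Y) (y : Y) : qh_extend A (j y) = proj1_sig A y.
Proof. rewrite (proj2 (qh_extend_spec A)). reflexivity. Qed.

Lemma qh_extend_unique (A : Opens L Y) (B : Z -> L) :
  lopen L Z B -> proj1_sig A = (fun y => B (j y)) -> qh_extend A = B.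
Proof.
  intros HB E. apply (proj1 (proj2 Hj)); [apply lopen_qh_extend | exact HB |].
  rewrite <- E. extensionality y. apply qh_extend_comp.
Qed.

Lemma qh_extend_is_point (z : Z) : is_point L Y (fun A => qh_extend A z).
Proof.
  split; [|split].
  - intros A B C E.
    rewrite (qh_extend_unique C (pmeet L (qh_extend A) (qh_extend B))); [reflexivity| |].
    + apply lopen_meet; apply lopen_qh_extend.
    + rewrite E. extensionality y. unfold pmeet. rewrite !qh_extend_comp. reflexivity.
  - intros S C E.
    rewrite (qh_extend_unique C (pjoin L (fun B => exists A, S A /\ B = qh_extend A))).
    + apply pjoin_image.
    + apply lopen_join. intros B [A [_ ->]]. apply lopen_qh_extend.
    + rewrite E. extensionality y. rewrite !pjoin_image.
      apply fsup_ext. intro a. split; intros [A [HA ->]]; exists A;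
        rewrite qh_extend_comp; auto.
  - intros lam C E. rewrite (qh_extend_unique C (fun _ => lam)); [reflexivity| |].
    + apply lopen_const.
    + exact E.
Qed.

End Quasihomeomorphism.

Lemma lsober_extend_along_quasihomeomorphism (X Y Z : ltop L) (j : Y -> Z) (f : Y -> X) :
  lsober L X -> quasihomeomorphism L Y Z j -> lcontinuous L Y X f ->
  exists g : Z -> X, lcontinuous L Z X g /\ forall y, g (j y) = f y.
Proof.
  intros [_ [Hinj Hsurj]] Hj Hf.
  assert (Hq : forall z, exists x,
             eval_point L X x = (fun U => qh_extend Y Z j Hj (lpreimage Hf U) z)).
  { intro z. apply Hsurj, (is_point_lpreimage Y X f Hf (fun A => qh_extend Y Z j Hj A z)).
    apply qh_extend_is_point. }
  destruct (choice _ Hq) as [g Hg].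
  exists g; split.
  - intros A HA.
    replace (fun z => A (g z)) with (qh_extend Y Z j Hj (lpreimage Hf (exist _ A HA))).
    + apply lopen_qh_extend.
    + extensionality z. symmetry. exact (f_equal (fun p => p (exist _ A HA)) (Hg z)).
  - intro y. apply Hinj. rewrite Hg. extensionality U.
    apply qh_extend_comp.
Qed.

Lemma lsober_strictly_injective (X : ltop L) : lsober L X -> strictly_injective L X.
Proof.
  intro Hs. split; [now apply lsober_T0|].
  intros Y Z j f _ _ [Hj _] Hf.
  exact (lsober_extend_along_quasihomeomorphism X Y Z j f Hs Hj Hf).
Qed.

Section PointSpace.
Variable X : ltop L.

Definition point : Type := { p : Opens L X -> L | is_point L X p }.

Definition point_open (U : Opens L X) : point -> L := fun p => proj1_sig p U.

Definition is_point_open (B : point -> L) : Prop := exists U, B = point_open U.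

Lemma point_open_meet (A B : point -> L) :
  is_point_open A -> is_point_open B -> is_point_open (pmeet L A B).
Proof.
  intros [U ->] [V ->].
  exists (exist _ (pmeet L (proj1_sig U) (proj1_sig V))
            (lopen_meet L X _ _ (proj2_sig U) (proj2_sig V))).
  extensionality p. symmetry. apply (proj1 (proj2_sig p)). reflexivity.
Qed.

Lemma point_open_join (S : (point -> L) -> Prop) :
  (forall A, S A -> is_point_open A) -> is_point_open (pjoin L S).
Proof.
  intro HS.
  set (SU := fun A : X -> L => exists U : Opens L X, S (point_open U) /\ A = proj1_sig U).
  assert (HSU : forall A, SU A -> lopen L X A) by (intros A [U [_ ->]]; apply proj2_sig).
  exists (exist _ (pjoin L SU) (lopen_join L X SU HSU)).
  extensionality p. unfold point_open at 1.
  rewrite (is_point_join_image X (proj1_sig p) _ (fun U => S (point_open U)) (fun U => U));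
    [| apply proj2_sig | reflexivity].
  apply fsup_ext. intro a; split.
  - intros [B [HB ->]]. destruct (HS B HB) as [U ->]. eauto.
  - intros [U [HU ->]]. eauto.
Qed.

Lemma point_open_const (a : L) : is_point_open (fun _ => a).
Proof.
  exists (exist _ (fun _ => a) (lopen_const L X a)).
  extensionality p. symmetry. apply (proj2 (proj2 (proj2_sig p))). reflexivity.
Qed.

Definition point_space : ltop L :=
  LTopSpace L point is_point_open point_open_meet point_open_join point_open_const.

Definition point_of (x : X) : point_space :=
  exist _ (eval_point L X x) (eval_point_is_point X x).

Lemma point_space_T0 : T0 L point_space.
Proof.
  intros p q H. apply eq_sig_hprop; [intros; apply proof_irrelevance|].
  extensionality U. apply (H (point_open U)). exists U; reflexivity.
Qed.

Lemma point_of_quasihomeomorphism : quasihomeomorphism L X point_space point_of.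
Proof.
  split; [|split].
  - intros B [U ->]. exact (proj2_sig U).
  - intros B1 B2 [U ->] [V ->] E.
    replace V with U; [reflexivity|].
    apply eq_sig_hprop; [intros; apply proof_irrelevance | exact E].
  - intros A HA. exists (point_open (exist _ A HA)). split; [eexists|]; reflexivity.
Qed.

Lemma point_of_subspace_embedding : T0 L X -> subspace_embedding L X point_space point_of.
Proof.
  intro HT. split.
  - intros x y E. apply (proj1 (T0_eval_point_inj X) HT).
    exact (f_equal (@proj1_sig _ _) E).
  - intro A. split.
    + intro HA. exists (point_open (exist _ A HA)). split; [eexists|]; reflexivity.
    + intros [B [[U ->] ->]]. exact (proj2_sig U).
Qed.

Lemma eval_point_retraction (g : point_space -> X) :
  lcontinuous L point_space X g -> (forall x, g (point_of x) = x) ->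
  forall p : point, eval_point L X (g p) = proj1_sig p.
Proof.
  intros Hg Hgx p. extensionality U.
  destruct (Hg (proj1_sig U) (proj2_sig U)) as [V HV].
  assert (UV : U = V).
  { apply eq_sig_hprop; [intros; apply proof_irrelevance|].
    extensionality x. rewrite <- (Hgx x) at 1.
    exact (f_equal (fun B => B (point_of x)) HV). }
  unfold eval_point. rewrite UV at 2.
  exact (f_equal (fun B => B p) HV).
Qed.

End PointSpace.

Lemma strictly_injective_lsober (X : ltop L) : strictly_injective L X -> lsober L X.
Proof.
  intros [HT Hext].
  destruct (Hext X (point_space X) (point_of X) (fun x => x) HT (point_space_T0 X)
              (conj (point_of_quasihomeomorphism X) (point_of_subspace_embedding X HT))
              (fun B HB => HB)) as [g [Hg Hgx]].
  split; [|split].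
  - apply eval_point_is_point.
  - exact (proj1 (T0_eval_point_inj X) HT).
  - intros p Hp. exists (g (exist _ p Hp)).
    exact (eval_point_retraction X g Hg Hgx (exist _ p Hp)).
Qed.

End LSobriety.

Theorem theorem3p12 (L : frame) (X : ltop L) :
  strictly_injective L X <-> lsober L X.
Proof.
  split.
  - apply strictly_injective_lsober.
  - apply lsober_strictly_injective.
Qed.
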